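(* Let $\Pi$ be a Lévy measure on $\mathbb{R}^d$ and assume $\overline{V}(t):=\int_{|y|\le t}|y|^2\,\Pi(dy)>0$ for all $t>0$. Let $g:[0,\infty)\to(0,\infty)$ be non-decreasing with $\int_0^c g(t)^{-1}dt<\infty$ for all $c>0$. Then $$\int_{|y|\le1}\frac{|y|^2}{g(\overline{V}(|y|))}\,\Pi(dy)<\infty.$$
   Context: A Lévy measure $\Pi$ satisfies $\Pi(\{0\})=0$ and $\int(1\wedge|y|^2)\Pi(dy)<\infty$; $|\cdot|$ is the Euclidean norm. *)

From HB Require Import structures.
From mathcomp Require Import all_boot all_order all_algebra.
From mathcomp Require Import all_classical all_reals all_analysis.
Import Order.TTheory GRing.Theory Num.Theory.
Import numFieldNormedType.Exports.
Local Open Scope classical_set_scope.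
Local Open Scope ring_scope.

(* R^d as row vectors 'rV[R]_d, with the Borel sigma-algebra
   (sigma-algebra generated by the open sets of the product topology). *)
Definition Rd (R : realType) (d : nat) :=
  g_sigma_algebraType (@open 'rV[R]_d).

Definition enorm {R : realType} {d : nat} (y : 'rV[R]_d) : R :=
  Num.sqrt (\sum_(i < d) (y ord0 i) ^+ 2).

Definition levy_measure {R : realType} {d : nat}
  (Pi : {measure set (Rd R d) -> \bar R}) : Prop :=
  Pi [set (0 : 'rV[R]_d)] = 0%E /\
  (\int[Pi]_y (Num.min 1 (enorm y ^+ 2))%:E < +oo)%E.

Definition Vbar {R : realType} {d : nat}
  (Pi : {measure set (Rd R d) -> \bar R}) (t : R) : \bar R :=
  (\int[Pi]_(y in [set y : Rd R d | (enorm y <= t)%R]) (enorm y ^+ 2)%:E)%E.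

From HB Require Import structures.
From mathcomp Require Import all_boot all_order all_algebra.
From mathcomp Require Import all_classical all_reals all_analysis.
From mathcomp Require Import measurable_realfun.
From mathcomp Require Import ring.
Import Order.TTheory GRing.Theory Num.Theory.
Import numFieldNormedType.Exports.
Local Open Scope classical_set_scope.
Local Open Scope ring_scope.

(* Write F(t) for the |y|^2 Pi-mass of the ball of radius t and V = F(1).
   A set {|y| <= 1, F(|y|) <= a} has |y|^2 Pi-mass at most a, being a ball
   or an increasing union of balls of mass at most a.  If
   V/2^(k+1) < F(|y|) <= V/2^k, then 1/g(F(|y|)) <= 1/g(V/2^(k+1)) and y lies
   in that set for a = V/2^k.  Hence the integral is at most
   sum_k (V/2^k) / g(V/2^(k+1)), four times a lower Riemann sum of 1/g on
   [0, V]. *)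

Section monotone_measurable.
Context {R : realType}.

Lemma is_interval_nondecreasing_measurable (D : set R) (f : R -> R) :
  is_interval D -> {in D &, {homo f : x y / x <= y}} -> measurable_fun D f.
Proof.
move=> iD f_nd.
apply: (measurability (@RGenCInfty.G R)) => [|/= _ [_] [r] -> <-].
  exact: RGenCInfty.measurableE.
apply: is_interval_measurable => s t [Ds fs] [Dt ft] z szt.
have Dz := iD s t Ds Dt z szt; split => //=.
move: fs; rewrite /= !in_itv/= !andbT => /le_trans; apply.
by case/andP: szt => sz _; apply: f_nd; rewrite ?inE.
Qed.

Lemma is_interval_nonincreasing_measurable (D : set R) (f : R -> R) :
  is_interval D -> {in D &, {homo f : x y /~ x <= y}} -> measurable_fun D f.
Proof.
move=> iD f_ni; rewrite -(opprK f); apply/measurable_funN.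
by apply: is_interval_nondecreasing_measurable => // s t Ds Dt st; rewrite lerN2 f_ni.
Qed.

End monotone_measurable.

Lemma nneseries_ge_cst_pinfty (R : realType) (u : nat -> R) (c : R) :
  0 < c -> (forall k, c <= u k) -> (\sum_(k <oo) (u k)%:E = +oo)%E.
Proof.
move=> c_gt0 cu; apply: eq_infty => r.
pose n := (Num.trunc (r / c)).+1.
have u_ge0 k : (0 <= (u k)%:E)%E by rewrite lee_fin (le_trans (ltW c_gt0)).
apply: le_trans (nneseries_lim_ge n (fun k _ _ => u_ge0 k)).
apply: (@le_trans _ _ (n%:R * c)%:E).
  by rewrite lee_fin -ler_pdivrMr// ltW// truncnS_gt.
rewrite big_mkord sumEFin lee_fin mulr_natl -[X in c *+ X](card_ord n).
by rewrite -sumr_const ler_sum.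
Qed.

Lemma integral_itv_oc_ge_cst (R : realType) (a b c : R) (h : R -> R) :
  a < b -> 0 <= c -> {in `]a, b]%classic, forall t, c <= h t} ->
  measurable_fun `]a, b]%classic h ->
  ((c * (b - a))%:E <= \int[lebesgue_measure]_(t in `]a, b]%classic) (h t)%:E)%E.
Proof.
move=> ab c_ge0 ch mh; rewrite EFinM.
have -> : (b - a)%:E = lebesgue_measure `]a, b]%classic.
  by rewrite lebesgue_measure_itv/= lte_fin ab EFinB.
rewrite -integral_cst//; apply: ge0_le_integral => //.
- exact/measurable_EFinP.
- by move=> t abt; rewrite lee_fin ch// inE.
Qed.

Section dyadic.
Context {R : realType}.
Implicit Types (V x : R) (k m n : nat).

Definition dyadic V k := V / 2 ^+ k.

Lemma dyadic0 V : dyadic V 0 = V.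
Proof. by rewrite /dyadic expr0 divr1. Qed.

Lemma dyadicS V k : dyadic V k.+1 = dyadic V k / 2.
Proof. by rewrite /dyadic exprS invfM mulrA mulrAC. Qed.

Lemma dyadic_gt0 V k : 0 < V -> 0 < dyadic V k.
Proof. by move=> V_gt0; rewrite divr_gt0// exprn_gt0. Qed.

Lemma dyadic_le V m n : 0 <= V -> (m <= n)%N -> dyadic V n <= dyadic V m.
Proof.
move=> V_ge0 mn; rewrite ler_wpM2l// lef_pV2 ?posrE ?exprn_gt0//.
by rewrite ler_weXn2l// ler1n.
Qed.

Lemma dyadic_ltS V k : 0 < V -> dyadic V k.+1 < dyadic V k.
Proof.
by move=> V_gt0; rewrite dyadicS ltr_pdivrMr// ltr_pMr ?dyadic_gt0// ltr1n.
Qed.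

Lemma dyadic_in_itv {V} k : 0 < V -> dyadic V k \in `[0, V]%classic.
Proof.
move=> V_gt0; rewrite inE/= in_itv/= ltW ?dyadic_gt0//=.
by rewrite -[leRHS]dyadic0 dyadic_le// ltW.
Qed.

Lemma dyadic_bracket V x : 0 < x -> x <= V ->
  exists k, dyadic V k.+1 < x <= dyadic V k.
Proof.
move=> x_gt0 xV.
have small : exists k, dyadic V k.+1 < x.
  exists (Num.trunc (V / x)); rewrite /dyadic ltr_pdivrMr ?exprn_gt0//.
  rewrite -ltr_pdivrMl// mulrC (lt_le_trans (truncnS_gt _))//.
  by rewrite -natrX ler_nat ltnW// ltn_expl.
have [k small_k kmin] := ex_minnP small.
exists k; rewrite small_k/=; case: k small_k kmin => [|k] _ kmin.
  by rewrite dyadic0.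
by rewrite leNgt; apply/negP => /kmin; rewrite ltnn.
Qed.

Lemma dyadic_lower_sum_le_integral V (h : R -> R) : 0 < V ->
  {in `[0, V]%classic &, {homo h : s t /~ s <= t}} ->
  {in `[0, V]%classic, forall t, 0 <= h t} ->
  (\sum_(k <oo) (h (dyadic V k.+1) * dyadic V k.+2)%:E <=
   \int[lebesgue_measure]_(t in `[0%R, V]%classic) (h t)%:E)%E.
Proof.
move=> V_gt0 h_ni h_ge0.
pose I k := `]dyadic V k.+2, dyadic V k.+1]%classic.
have I_sub k : I k `<=` `[0, V]%classic.
  move=> t; rewrite /I /= !in_itv/= => /andP[lt le].
  move: (dyadic_in_itv k.+1 V_gt0); rewrite inE/= in_itv/= => /andP[_ kV].
  by rewrite (le_trans (ltW (dyadic_gt0 _ _ V_gt0)) (ltW lt))/= (le_trans le).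
have mh : measurable_fun `[0, V]%classic h.
  apply: is_interval_nonincreasing_measurable h_ni.
  exact: interval_is_interval.
have h_ge0E D : D `<=` `[0, V]%classic -> forall t, D t -> (0 <= (h t)%:E)%E.
  by move=> DV t /DV Vt; rewrite lee_fin h_ge0// inE.
have lower_sum k : ((h (dyadic V k.+1) * dyadic V k.+2)%:E <=
    \int[lebesgue_measure]_(t in I k) (h t)%:E)%E.
  have -> : dyadic V k.+2 = dyadic V k.+1 - dyadic V k.+2.
    by rewrite (dyadicS V k.+1); field.
  apply: integral_itv_oc_ge_cst; rewrite ?dyadic_ltS ?h_ge0 ?dyadic_in_itv//.
  - move=> t; rewrite inE => It; rewrite h_ni ?dyadic_in_itv//.
      by rewrite inE; exact: I_sub It.
    by move: It; rewrite /I/= in_itv/= => /andP[].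
  - exact: measurable_funS (I_sub k) mh.
apply: le_trans (lee_nneseries _ (fun k _ => lower_sum k)) _.
  by move=> k _ _; rewrite lee_fin mulr_ge0 ?h_ge0 ?dyadic_in_itv ?ltW ?dyadic_gt0.
have I_disj : trivIset setT I.
  apply: ltn_trivIset => n m mn; apply/seteqP; split => // t [].
  rewrite /I/= !in_itv/= => /andP[tm _] /andP[_ tn].
  have := le_trans tn (dyadic_le V m.+2 n.+1 (ltW V_gt0) mn).
  by move=> /(lt_le_trans tm); rewrite ltxx.
have IV : \bigcup_k I k `<=` `[0, V]%classic by move=> t [k _]; exact: I_sub.
rewrite -ge0_integral_bigcup//; last 3 first.
- by move=> k; exact: measurable_itv.
- by apply/measurable_EFinP; apply: (measurable_funS _ IV).
- exact: h_ge0E.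
apply: ge0_subset_integral => //.
- by apply: bigcupT_measurable => k; exact: measurable_itv.
- exact/measurable_EFinP.
- exact: h_ge0E.
Qed.

End dyadic.

Section sublevel_integral.
Context {dT : measure_display} {T : measurableType dT} {R : realType}.
Variables (mu : {measure set T -> \bar R}) (phi : T -> R) (f : T -> R).
Hypotheses (mphi : measurable_fun setT phi) (mf : measurable_fun setT f).
Hypothesis f_ge0 : forall y, 0 <= f y.

Definition sublevel_integral (t : R) : \bar R :=
  \int[mu]_(y in [set y | phi y <= t]) (f y)%:E.

Local Notation F := sublevel_integral.

Lemma measurable_sublevel t : measurable [set y | phi y <= t].
Proof.
have := mphi measurableT `]-oo, t]%classic (measurable_itv _).
by rewrite setTI; congr measurable; apply/seteqP; split => y /=; rewrite in_itv.
Qed.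

Lemma measurable_strict_sublevel r : measurable [set y | phi y < r].
Proof.
have := mphi measurableT `]-oo, r[%classic (measurable_itv _).
by rewrite setTI; congr measurable; apply/seteqP; split => y /=; rewrite in_itv.
Qed.

Let fE_ge0 y : (0 <= (f y)%:E)%E.
Proof. by rewrite lee_fin. Qed.

Let mfE (D : set T) : measurable_fun D (fun y => (f y)%:E).
Proof. exact/measurable_EFinP/(measurable_funS _ (@subsetT _ D) mf). Qed.

Lemma sublevel_integral_ge0 t : (0 <= F t)%E.
Proof. by apply: integral_ge0 => y _; rewrite lee_fin. Qed.

Lemma le_sublevel_integral : {homo F : s t / s <= t >-> (s <= t)%E}.
Proof.
move=> s t st; apply: ge0_subset_integral => //; try exact: measurable_sublevel.
by move=> y /= ys; exact: le_trans ys st.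
Qed.

Lemma strict_sublevel_integral_le r a : (forall s, s < r -> (F s <= a)%E) ->
  (\int[mu]_(y in [set y | (phi y < r)%R]) (f y)%:E <= a)%E.
Proof.
move=> Fa; pose E n := [set y | phi y <= r - n.+1%:R^-1].
have nd_E : nondecreasing_seq E.
  move=> m n mn; rewrite subsetEset => y /= /le_trans; apply.
  by rewrite lerD2l lerN2 lef_pV2 ?posrE// ler_nat.
have -> : [set y | phi y < r] = \bigcup_n E n.
  apply/seteqP; split => y /=; last first.
    by move=> [n _] /le_lt_trans; apply; rewrite ltrBlDr ltrDl.
  move=> yr; exists (Num.trunc ((r - phi y)^-1)) => //=.
  rewrite /E/= lerBrDr addrC -lerBrDr -[leRHS](invrK (r - phi y)).
  by rewrite lef_pV2 ?posrE ?invr_gt0 ?subr_gt0// ltW// truncnS_gt.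
have cvgE := ge0_nondecreasing_set_cvg_integral nd_E (fun n => measurable_sublevel _)
  (fun n => mfE _) (fun n y _ => fE_ge0 y) (mu := mu).
rewrite -(cvg_lim _ cvgE)//; apply: lime_le; first exact: cvgP cvgE.
by apply: nearW => n; apply: Fa; rewrite ltrBlDr ltrDl.
Qed.

Lemma integral_le_of_sublevel_integral_le (A : set T) a : measurable A ->
  (0 <= a)%E -> has_ubound (phi @` A) -> (forall y, A y -> (F (phi y) <= a)%E) ->
  (\int[mu]_(y in A) (f y)%:E <= a)%E.
Proof.
move=> mA a_ge0 ubA Fa.
(* For r the supremum of phi on A, A lies in {phi <= r} if the supremum is
   attained and in {phi < r} otherwise. *)
have [->|/set0P[y0 Ay0]] := eqVneq A set0; first by rewrite integral_set0.
have supA : has_sup (phi @` A) by split=> //; exists (phi y0), y0.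
pose r := sup (phi @` A).
have le_r y : A y -> phi y <= r by move=> Ay; apply: sup_upper_bound => //; exists y.
have [[y1 Ay1 ry1]|r_notin] := pselect (exists2 y, A y & phi y = r).
  apply: le_trans (Fa _ Ay1); apply: ge0_subset_integral => //.
  - exact: measurable_sublevel.
  - by move=> y /le_r; rewrite /= ry1.
apply: le_trans (strict_sublevel_integral_le r a _).
  apply: ge0_subset_integral => //; first exact: measurable_strict_sublevel.
  move=> y Ay /=; rewrite lt_neqAle le_r// andbT; apply/eqP => ry.
  by apply: r_notin; exists y.
move=> s sr; have rs_gt0 : 0 < r - s by rewrite subr_gt0.
have [_ [y Ay <-] sy] := sup_adherent rs_gt0 supA.
apply: le_trans (Fa _ Ay); apply: le_sublevel_integral; apply: ltW.
by move: sy; rewrite opprB addrCA subrr addr0.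
Qed.

Lemma measurable_sublevel_integral_le b a :
  measurable [set y | phi y <= b /\ (F (phi y) <= a)%E].
Proof.
have mFa : measurable [set t | (F t <= a)%E].
  apply: is_interval_measurable => s t _ /= Ft z /andP[_ zt] /=.
  exact: le_trans (le_sublevel_integral _ _ zt) Ft.
have := measurableI _ _ (measurable_sublevel b) (mphi measurableT _ mFa).
by rewrite setTI.
Qed.

Variables (b : R) (h : R -> R).
Hypotheses (Fb_fin : F b \is a fin_num) (Fb_gt0 : (0 < F b)%E).

Let V := fine (F b).

Hypothesis h_gt0 : {in `[0, V]%classic, forall t, 0 < h t}.
Hypothesis h_ni : {in `[0, V]%classic &, {homo h : s t /~ s <= t}}.

Let V_gt0 : 0 < V.
Proof. by rewrite fine_gt0// Fb_gt0 -ge0_fin_numE ?sublevel_integral_ge0. Qed.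

Let sublevel_integral_fin t : t <= b -> F t \is a fin_num.
Proof.
move=> tb; rewrite ge0_fin_numE ?sublevel_integral_ge0//.
apply: le_lt_trans (le_sublevel_integral _ _ tb) _.
by rewrite -ge0_fin_numE ?sublevel_integral_ge0.
Qed.

Let fine_sublevel_integral_le s t : s <= t -> t <= b -> fine (F s) <= fine (F t).
Proof.
move=> st tb; apply: fine_le; rewrite ?inE ?sublevel_integral_fin//.
  exact: le_trans st tb.
exact: le_sublevel_integral _ _ st.
Qed.

Let fine_sublevel_integral_in t : t <= b -> fine (F t) \in `[0, V]%classic.
Proof.
move=> tb; rewrite inE/= in_itv/= fine_ge0 ?sublevel_integral_ge0//=.
exact: fine_sublevel_integral_le.
Qed.

Let S k := [set y | phi y <= b /\ (F (phi y) <= (dyadic V k)%:E)%E].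
Let u k := (fun y => (h (dyadic V k.+1) * f y)%:E) \_ (S k).

Let measurable_S k : measurable (S k).
Proof. exact: measurable_sublevel_integral_le. Qed.

Let h_dyadic_gt0 k : 0 < h (dyadic V k).
Proof. exact/h_gt0/dyadic_in_itv. Qed.

Let u_ge0 k y : (0 <= u k y)%E.
Proof.
by apply: erestrict_ge0 => z _; rewrite lee_fin mulr_ge0// ltW.
Qed.

Let measurable_u k : measurable_fun setT (u k).
Proof.
apply/(measurable_restrictT _ (measurable_S k)).
by apply/measurable_EFinP/measurable_funM => //; exact: measurable_funS mf.
Qed.

Lemma le_dyadic_sublevel_series y : phi y <= b ->
  ((f y * h (fine (F (phi y))))%:E <= \sum_(k <oo) u k y)%E.
Proof.
move=> yb; set x := fine (F (phi y)).
have Fx : F (phi y) = x%:E by rewrite fineK ?sublevel_integral_fin.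
have [x0|x_gt0] : x = 0 \/ 0 < x.
  have := fine_sublevel_integral_in _ yb; rewrite inE/= in_itv/= le_eqVlt.
  by case/andP => /predU1P[]; [left|right].
(* [y] lies in every [S k], so the series diverges unless [f y = 0]. *)
- have [fy0|fy_neq0] := eqVneq (f y) 0.
    by rewrite fy0 mul0r nneseries_ge0// => k _ _; exact: u_ge0.
  have -> : (\sum_(k <oo) u k y = +oo)%E.
    rewrite (eq_eseriesr (g := fun k => (h (dyadic V k.+1) * f y)%:E)); last first.
      move=> k _; have Sky : S k y by split; rewrite // Fx x0 lee_fin ltW ?dyadic_gt0.
      by rewrite /u patchE mem_set.
    apply: (@nneseries_ge_cst_pinfty _ _ (h (dyadic V 1) * f y)).
      by rewrite mulr_gt0// lt_neqAle eq_sym fy_neq0 f_ge0.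
    by move=> k; rewrite ler_wpM2r// h_ni ?dyadic_in_itv// dyadic_le// ltW.
  by rewrite leey.
- have [k /andP[kx xk]] :=
    dyadic_bracket _ _ x_gt0 (fine_sublevel_integral_le _ _ yb (lexx _)).
  apply: (@le_trans _ _ (u k y)); last first.
    apply: le_trans (nneseries_lim_ge k.+1 (fun n _ _ => u_ge0 n y)).
    by rewrite big_nat_recr//= leeDr// sume_ge0// => n _; exact: u_ge0.
  rewrite /u patchE mem_set /S/=; last by rewrite Fx lee_fin.
  rewrite lee_fin mulrC ler_wpM2r// h_ni ?dyadic_in_itv ?ltW//.
  exact: fine_sublevel_integral_in.
Qed.

Lemma integral_dyadic_sublevel_series :
  (\int[mu]_(y in [set y | (phi y <= b)%R]) \sum_(k <oo) u k y <=
   \sum_(k <oo) (h (dyadic V k.+1) * dyadic V k)%:E)%E.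
Proof.
rewrite integral_nneseries//; last 2 first.
- exact: measurable_sublevel.
- by move=> k; exact: measurable_funS (measurable_u k).
apply: lee_nneseries => [k _ _|k _]; first by apply: integral_ge0 => y _; exact: u_ge0.
have c_ge0 : 0 <= h (dyadic V k.+1) by exact: ltW.
rewrite /u -integral_mkcondr setIidr; last by move=> y [].
under eq_integral do rewrite EFinM.
rewrite ge0_integralZl_EFin//.
rewrite EFinM lee_wpmul2l ?lee_fin//.
apply: integral_le_of_sublevel_integral_le => //.
- by rewrite lee_fin ltW ?dyadic_gt0.
- by exists b => _ [y [yb _] <-].
- by move=> y [].
Qed.

Theorem integral_mul_sublevel_integral_le :
  (\int[mu]_(y in [set y | (phi y <= b)%R]) (f y * h (fine (F (phi y))))%:E <=
   4%:E * \int[lebesgue_measure]_(t in `[0%R, V]%classic) (h t)%:E)%E.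
Proof.
have mhF : measurable_fun `]-oo, b]%classic (fun t => h (fine (F t))).
  apply: is_interval_nonincreasing_measurable; first exact: interval_is_interval.
  move=> s t; rewrite !inE/= !in_itv/= => sb tb st.
  by apply: h_ni; rewrite ?fine_sublevel_integral_in//; exact: fine_sublevel_integral_le.
apply: (@le_trans _ _ (\int[mu]_(y in [set y | (phi y <= b)%R]) \sum_(k <oo) u k y)%E).
  apply: ge0_le_integral => //; first exact: measurable_sublevel.
  - by move=> y yb; rewrite lee_fin mulr_ge0// ltW// h_gt0// fine_sublevel_integral_in.
  - apply/measurable_EFinP/measurable_funM; first exact: measurable_funS mf.
    apply: (measurable_comp (measurable_itv _) _ mhF); last exact: measurable_funS mphi.
    by move=> _ [y yb <-]; rewrite /= in_itv.
  - apply: ge0_emeasurable_sum; first by move=> k y _ _; exact: u_ge0.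
    by move=> k _; exact: measurable_funS (measurable_u k).
  - exact: le_dyadic_sublevel_series.
apply: le_trans integral_dyadic_sublevel_series _.
have -> : (\sum_(k <oo) (h (dyadic V k.+1) * dyadic V k)%:E =
    4%:E * \sum_(k <oo) (h (dyadic V k.+1) * dyadic V k.+2)%:E)%E.
  rewrite -nneseriesZl; last first.
    by move=> k _; rewrite lee_fin mulr_ge0 ?ltW ?dyadic_gt0.
  by apply: eq_eseriesr => k _; rewrite -EFinM !dyadicS; congr EFin; field.
apply: lee_wpmul2l => //; apply: dyadic_lower_sum_le_integral => //.
by move=> t Vt; exact/ltW/h_gt0.
Qed.

End sublevel_integral.

Section euclidean_norm.
Context {R : realType} {d : nat}.

Lemma enorm_ge0 (y : 'rV[R]_d) : 0 <= enorm y.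
Proof. exact: sqrtr_ge0. Qed.

Lemma continuous_enorm : continuous (@enorm R d).
Proof.
move=> y; apply: continuous_comp; last exact: sqrt_continuous.
apply: (@cvg_big R 'I_d +%R 0 xpredT add_continuous _ (nbhs y) (index_enum 'I_d)
  (fun i (z : 'rV[R]_d) => z ord0 i ^+ 2)) => // i _.
by rewrite expr2; apply: cvgM; exact: coord_continuous.
Qed.

Lemma measurable_enorm : measurable_fun setT (@enorm R d : Rd R d -> R).
Proof.
apply: (measurability (@RGenOInfty.G R)); first exact: RGenOInfty.measurableE.
move=> _ [_ [x ->] <-]; rewrite setTI; apply: sub_sigma_algebra.
by apply: open_comp; [move=> z _; exact: continuous_enorm | exact: rray_open].
Qed.

Lemma measurable_enorm_sqr :
  measurable_fun setT (fun y : Rd R d => enorm y ^+ 2).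
Proof. exact: measurable_funX measurable_enorm. Qed.

End euclidean_norm.

Lemma levy_Vbar1_fin_num {R : realType} {d : nat}
    (Pi : {measure set (Rd R d) -> \bar R}) :
  levy_measure Pi -> Vbar Pi 1 \is a fin_num.
Proof.
move=> [_ Pi_int].
have mmin : measurable_fun setT (fun y : Rd R d => (Num.min 1 (enorm y ^+ 2))%:E).
  by apply/measurable_EFinP/measurable_minr => //; exact: measurable_enorm_sqr.
rewrite ge0_fin_numE; last by apply: integral_ge0 => y _; rewrite lee_fin sqr_ge0.
apply: le_lt_trans Pi_int.
apply: (@le_trans _ _ (\int[Pi]_(y in [set y : Rd R d | (enorm y <= 1)%R])
    (Num.min 1 (enorm y ^+ 2))%:E)%E).
  apply: ge0_le_integral => //.
  - exact: measurable_sublevel measurable_enorm 1.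
  - by move=> y _; rewrite lee_fin sqr_ge0.
  - by apply/measurable_EFinP; exact: measurable_funS measurable_enorm_sqr.
  - exact: measurable_funS mmin.
  - move=> y /= y1; rewrite lee_fin le_min lexx andbT.
    by rewrite -(expr1n _ 2) ler_pXn2r ?nnegrE ?enorm_ge0.
apply: ge0_subset_integral => //; first exact: measurable_sublevel measurable_enorm 1.
by move=> y _; rewrite lee_fin le_min ler01 sqr_ge0.
Qed.

Theorem lemma4p1 (R : realType) (d : nat)
  (Pi : {measure set (Rd R d) -> \bar R}) (g : R -> R) :
  levy_measure Pi ->
  (forall t : R, 0 < t -> (0 < Vbar Pi t)%E) ->
  (forall t : R, 0 <= t -> 0 < g t) ->
  (forall s t : R, 0 <= s -> s <= t -> g s <= g t) ->
  (forall c : R, 0 < c ->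
     (\int[lebesgue_measure]_(t in `[0%R, c]%classic) ((g t)^-1)%:E < +oo)%E) ->
  (\int[Pi]_(y in [set y : Rd R d | (enorm y <= 1)%R])
      ((enorm y ^+ 2) / g (fine (Vbar Pi (enorm y))))%:E < +oo)%E.
Proof.
move=> levy_Pi Vbar_gt0 g_gt0 g_nd g_int.
have V1_fin : Vbar Pi 1 \is a fin_num := levy_Vbar1_fin_num _ levy_Pi.
have V1_gt0 := Vbar_gt0 _ ltr01.
have ginv_gt0 : {in `[0, fine (Vbar Pi 1)]%classic, forall t, 0 < (g t)^-1}.
  by move=> t; rewrite inE/= in_itv/= => /andP[t0 _]; rewrite invr_gt0 g_gt0.
have ginv_ni : {in `[0, fine (Vbar Pi 1)]%classic &,
    {homo (fun t => (g t)^-1) : s t /~ s <= t}}.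
  move=> s t; rewrite !inE/= !in_itv/= => /andP[s0 _] /andP[t0 _] st.
  by rewrite lef_pV2 ?posrE ?g_gt0// g_nd.
(* [Vbar Pi] is [sublevel_integral Pi enorm (fun y => enorm y ^+ 2)] by conversion. *)
apply: le_lt_trans (integral_mul_sublevel_integral_le Pi _ _ measurable_enorm
  measurable_enorm_sqr (fun y => sqr_ge0 (enorm y)) _ (fun t => (g t)^-1)
  V1_fin V1_gt0 ginv_gt0 ginv_ni) _.
by rewrite lte_mul_pinfty// g_int// fine_gt0// V1_gt0 -ge0_fin_numE ?ltW.
Qed.
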